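(* Let $q\in X^*\setminus\{e\}$ and let $q_0$ be the shortest word in $P_q$. If $|q_0|$ does not divide $|q|$ and $|q_0|\le|q|/2$, then there exists $q'\in X^*\setminus\{e\}$ with $P_q^*\subsetneq P_{q'}^*$. Consequently, if $|q_0|$ does not divide $|q|$ and $P_q^*$ is maximal with respect to inclusion in the class $\{P_{q'}^*: q'\in X^*\setminus\{e\}\}$, then $|q_0|>|q|/2$.
   Context: $X$ is a finite alphabet; $X^*$ the finite words (empty word $e$); $|w|$ is length; $w\sqsubseteq\eta$ means $w$ is a prefix of $\eta$, $w\sqsubset\eta$ a proper prefix. For $q\in X^*\setminus\{e\}$, $P_q:=\{v: e\sqsubset v\sqsubseteq q\sqsubset v\cdot q\}$; $q_0$ is its shortest element. $L^*=\bigcup_{i\in\mathbb{N}}L^i$. *)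

From mathcomp Require Import all_boot.
Set Implicit Arguments. Unset Strict Implicit. Unset Printing Implicit Defensive.

Definition pprefix (X : eqType) (w eta : seq X) : bool :=
  prefix w eta && (w != eta).

Definition Pset (X : eqType) (q : seq X) : pred (seq X) :=
  fun v => [&& pprefix [::] v, prefix v q & pprefix q (v ++ q)].

Definition star (X : eqType) (L : pred (seq X)) (w : seq X) : Prop :=
  exists ws : seq (seq X), all L ws /\ flatten ws = w.

Definition lang_subset (X : eqType) (A B : seq X -> Prop) : Prop :=
  forall w, A w -> B w.

From mathcomp Require Import all_boot zify.
Set Implicit Arguments. Unset Strict Implicit.

(* v lies in P_q exactly when v is a nonempty prefix of q whose length is a
   period of q.  Let p = |q0| be the least period and q' the prefix of q of
   length |q| - p.  Since q has period p, dropping q0 from q leaves q', so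
   every longer u in P_q splits as q0 followed by a prefix of q' of length
   |u| - p, which is again a period of q'; as p <= |q'|, q0 itself lies in
   P_q'.  Hence P_q^* is contained in P_q'^*, and q' lies in P_q'^*.  But the
   periods of q up to |q| - p are multiples of p (subtract p repeatedly), so
   every word of P_q^* of length at most |q| - p has length divisible by p,
   while |q'| = |q| - p is not. *)

Section Periods.

Variables (X : eqType) (x0 : X).

Definition periodic (s : seq X) (t : nat) : Prop :=
  forall i, i + t < size s -> nth x0 s (i + t) = nth x0 s i.

Lemma periodicP s t : periodic s t <-> drop t s = take (size s - t) s.
Proof.
split=> [per | eq_drop i lt_it].
- apply: (eq_from_nth (x0 := x0)) => [|i]; first by rewrite size_drop size_takel ?leq_subr.
  rewrite size_drop => lt_i; rewrite nth_drop nth_take // addnC per //; lia.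
- by rewrite -[i + t]addnC -nth_drop eq_drop nth_take //; lia.
Qed.

Lemma periodic_take s m t : periodic s t -> periodic (take m s) t.
Proof.
move=> per i; rewrite size_take_min => lt_it.
rewrite !nth_take ?per //; lia.
Qed.

Lemma periodic_sub s p t :
  periodic s p -> periodic s t -> p <= t -> t + p <= size s -> periodic s (t - p).
Proof.
move=> per_p per_t le_pt le_tps i lt_i.
have [lt_ip | le_pi] := ltnP i p.
- rewrite -[in RHS]per_t; last lia.
  by rewrite -per_p; [congr nth; lia | lia].
- have -> : i + (t - p) = i - p + t by lia.
  by rewrite per_t; [rewrite -per_p; [congr nth; lia | lia] | lia].
Qed.

Lemma periodic_take_sub s p t :
  periodic s p -> periodic s t -> p <= t ->
  periodic (take (size s - p) s) (t - p).
Proof.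
move=> per_p per_t le_pt i; rewrite size_takel ?leq_subr // => lt_i.
rewrite !nth_take; try lia.
rewrite -per_p; last lia.
have -> : i + (t - p) + p = i + t by lia.
by rewrite per_t //; lia.
Qed.

Lemma take_periodic s p t :
  periodic s p -> p <= t ->
  take t s = take p s ++ take (t - p) (take (size s - p) s).
Proof. by move=> /periodicP <- le_pt; rewrite -takeD subnKC. Qed.

Lemma PsetP s v :
  Pset s v <->
  [/\ 0 < size v, size v <= size s, v = take (size v) s & periodic s (size v)].
Proof.
rewrite /Pset /pprefix prefix0s /= !prefixE.
have v_nil : (v != [::]) = (0 < size v) by case: v.
have cat_neq : (s != v ++ s) = (0 < size v).
  case: v {v_nil} => [|x v]; first by rewrite eqxx.
  by apply/eqP => /(congr1 size); rewrite size_cat /=; lia.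
rewrite eq_sym v_nil cat_neq; split.
- case/and4P=> v_gt0 /eqP v_pre /eqP s_pre _.
  have le_vs : size v <= size s by rewrite -{1}v_pre size_take_min geq_minr.
  split=> //; apply/periodicP.
  move: s_pre; rewrite take_cat ltnNge le_vs /=.
  by move/(congr1 (drop (size v))); rewrite drop_size_cat.
- case=> v_gt0 le_vs v_pre /periodicP per; apply/and4P; split => //; apply/eqP.
    by rewrite -v_pre.
  rewrite take_cat ltnNge le_vs /= -per {1}v_pre.
  by rewrite cat_take_drop.
Qed.

Lemma Pset_take s t :
  0 < t -> t <= size s -> periodic s t -> Pset s (take t s).
Proof. by move=> t_gt0 le_ts per; apply/PsetP; rewrite size_takel. Qed.

End Periods.

Lemma Pset_self (X : eqType) (s : seq X) : s != [::] -> Pset s s.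
Proof.
move=> s_nil; rewrite /Pset /pprefix prefix0s prefix_refl prefix_prefix eq_sym s_nil /=.
apply: contra s_nil => /eqP/(congr1 size)/eqP.
by rewrite size_cat -{1}[size s]addn0 eqn_add2l eq_sym size_eq0.
Qed.

Section Star.

Variable X : eqType.

Lemma star1 (L : pred (seq X)) w : L w -> star L w.
Proof. by exists [:: w]; rewrite /= cats0 andbT. Qed.

Lemma star_cat (L : pred (seq X)) a b : star L a -> star L b -> star L (a ++ b).
Proof.
case=> [wa [La <-]] [wb [Lb <-]].
by exists (wa ++ wb); rewrite all_cat La Lb flatten_cat.
Qed.

Lemma sub_star (L M : pred (seq X)) :
  (forall u, L u -> star M u) -> lang_subset (star L) (star M).
Proof.
move=> LM w [ws [Lws <-]]; elim: ws Lws => [|u ws IH] /=; first by exists [::].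
by case/andP=> Lu Lws; apply: star_cat; [apply: LM | apply: IH].
Qed.

Lemma star_dvdn_size (L : pred (seq X)) d m w :
  (forall u, L u -> size u <= m -> d %| size u) ->
  star L w -> size w <= m -> d %| size w.
Proof.
move=> Ld [ws [Lws <-]]; elim: ws Lws => [|u ws IH] //= /andP[Lu Lws].
rewrite size_cat => le_m; apply: dvdn_add; [apply: Ld | apply: IH] => //; lia.
Qed.

End Star.

Section MinimalPeriod.

Variables (X : eqType) (x0 : X) (q : seq X) (p : nat).
Hypotheses (p_gt0 : 0 < p) (le_pq : p <= size q) (q_per : periodic x0 q p).
Hypothesis p_min :
  forall t, 0 < t -> t <= size q -> periodic x0 q t -> p <= t.

Lemma dvdn_period t : 0 < t -> t <= size q - p -> periodic x0 q t -> p %| t.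
Proof.
elim/ltn_ind: t => t IH t_gt0 le_t per_t.
have le_pt : p <= t by apply: p_min => //; lia.
have [lt_pt | le_tp] := ltnP p t; last by have -> : t = p by lia.
rewrite -(subnKC le_pt) dvdn_addr //; apply: IH; try lia.
by apply: periodic_sub => //; lia.
Qed.

Lemma star_Pset_dvdn w :
  star (Pset q) w -> size w <= size q - p -> p %| size w.
Proof.
apply: star_dvdn_size => u /(PsetP x0)[u_gt0 _ _ per_u] le_u.
exact: dvdn_period.
Qed.

Lemma Pset_star_shift u :
  2 * p <= size q -> Pset q u -> star (Pset (take (size q - p) q)) u.
Proof.
set q' := take (size q - p) q => le_2p /(PsetP x0)[u_gt0 le_uq u_eq per_u].
have size_q' : size q' = size q - p by rewrite size_takel ?leq_subr.
have Pq0 : Pset q' (take p q).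
  have -> : take p q = take p q' by rewrite take_takel //; lia.
  by apply: (Pset_take (x0 := x0)); rewrite ?size_q'; [lia | lia | apply: periodic_take].
have le_pu : p <= size u by apply: p_min.
rewrite u_eq (take_periodic q_per le_pu).
have [lt_pu | eq_pu] := ltnP p (size u); last first.
  have -> : size u - p = 0 by lia.
  by rewrite take0 cats0; apply: star1.
apply: star_cat; apply: star1 => //.
by apply: (Pset_take (x0 := x0)); rewrite ?size_q'; [lia | lia | apply: periodic_take_sub].
Qed.

Lemma not_star_Pset_shift :
  ~~ (p %| size q) -> ~ star (Pset q) (take (size q - p) q).
Proof.
move=> ndvd_pq /star_Pset_dvdn; rewrite size_takel ?leq_subr // => /(_ (leqnn _)).
apply/negP; apply: contra ndvd_pq => dvd_p.
by rewrite -(subnKC le_pq) dvdn_add.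
Qed.

Lemma star_Pset_strict_shift :
  2 * p <= size q -> ~~ (p %| size q) ->
  exists q' : seq X, q' != [::] /\
    lang_subset (star (Pset q)) (star (Pset q')) /\
    exists w, star (Pset q') w /\ ~ star (Pset q) w.
Proof.
move=> le_2p ndvd_pq; set q' := take (size q - p) q.
have q'_nil : q' != [::].
  rewrite -size_eq0 size_takel ?leq_subr // subn_eq0 -ltnNge ltn_neqAle le_pq andbT.
  by apply: contraNneq ndvd_pq => <-.
exists q'; split=> //; split; first by apply: sub_star => u; apply: Pset_star_shift.
by exists q'; split; [apply/star1/Pset_self | apply: not_star_Pset_shift].
Qed.

End MinimalPeriod.

Theorem lemma4 (X : finType) (q q0 : seq X) :
  q != [::] ->
  Pset q q0 ->
  (forall v, Pset q v -> size q0 <= size v) ->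
  ~~ (size q0 %| size q) ->
  ((2 * size q0 <= size q ->
      exists q' : seq X, q' != [::] /\
        lang_subset (star (Pset q)) (star (Pset q')) /\
        exists w, star (Pset q') w /\ ~ star (Pset q) w)
   /\
   ((forall q' : seq X, q' != [::] ->
       lang_subset (star (Pset q)) (star (Pset q')) ->
       lang_subset (star (Pset q')) (star (Pset q))) ->
    size q < 2 * size q0)).
Proof.
move=> q_nil Pq0 q0_min ndvd.
have [x0 _] : exists x0 : X, True by case: q q_nil {Pq0 q0_min ndvd} => // x; exists x.
case/(PsetP x0): Pq0 => q0_gt0 le_q0 _ q_per.
have p_min t : 0 < t -> t <= size q -> periodic x0 q t -> size q0 <= t.
  by move=> t_gt0 le_t per_t; have := q0_min _ (Pset_take t_gt0 le_t per_t); rewrite size_takel.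
have proper := star_Pset_strict_shift q0_gt0 le_q0 q_per p_min.
split=> [le_2p | maximal]; first exact: proper.
rewrite ltnNge; apply/negP => /proper/(_ ndvd)[q' [q'_nil [sub [w [Pw nPw]]]]].
exact/nPw/(maximal q' q'_nil sub).
Qed.
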